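(* Let $M$ be a real $n\times n$ matrix, $n\ge2$. If both $M$ and $M^{[2]}$ are $P_0$-matrices, then $M$ is positive semistable. If both $M$ and $M^{[2]}$ are $P$-matrices, then $M$ is positive stable.
   Context: A square real matrix is a $P$-matrix (resp. $P_0$-matrix) if all its principal minors are positive (resp. nonnegative). It is positive stable (resp. positive semistable) if all its eigenvalues have positive (resp. nonnegative) real part. For $M\in\mathbb{R}^{n\times n}$, $M^{[2]}$ is the second additive compound: the matrix of $u\wedge v\mapsto Mu\wedge v+u\wedge Mv$ on $\Lambda^2\mathbb{R}^n$ with respect to the lexicographically ordered basis $e_i\wedge e_j$ ($i<j$). *)

(* Real matrices are taken over an arbitrary real closed
   field R (the reals being the prime example); eigenvalues live in R[i]. *)
From HB Require Import structures.
From mathcomp Require Import all_boot all_order all_algebra.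
From mathcomp Require Import complex.
Set Implicit Arguments. Unset Strict Implicit. Unset Printing Implicit Defensive.
Import Order.TTheory GRing.Theory Num.Theory.
Local Open Scope ring_scope.

Section Defs.
Variable R : rcfType.

Definition principal_submx (n : nat) (M : 'M[R]_n) (S : {set 'I_n}) : 'M[R]_#|S| :=
  \matrix_(i < #|S|, j < #|S|) M (enum_val i) (enum_val j).

Definition principal_minor (n : nat) (M : 'M[R]_n) (S : {set 'I_n}) : R :=
  \det (principal_submx M S).

Definition P_matrix (n : nat) (M : 'M[R]_n) : Prop :=
  forall S : {set 'I_n}, S != set0 -> 0 < principal_minor M S.
Definition P0_matrix (n : nat) (M : 'M[R]_n) : Prop :=
  forall S : {set 'I_n}, S != set0 -> 0 <= principal_minor M S.

Definition cmx (n : nat) (M : 'M[R]_n) : 'M[R[i]]_n := map_mx (fun x => x%:C%C) M.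
Definition positive_stable (n : nat) (M : 'M[R]_n) : Prop :=
  forall l : R[i], eigenvalue (cmx M) l -> 0 < complex.Re l.
Definition positive_semistable (n : nat) (M : 'M[R]_n) : Prop :=
  forall l : R[i], eigenvalue (cmx M) l -> 0 <= complex.Re l.

(* Second additive compound.  Index set: pairs (i,j) with i<j; the product
   finType enumerates pairs lexicographically, so enum_val gives the
   lexicographically ordered basis e_i /\ e_j (i<j). *)
Definition wedge_idx (n : nat) : {set 'I_n * 'I_n} :=
  [set p : 'I_n * 'I_n | (p.1 < p.2)%N].

(* coordinate of u /\ v on e_i /\ e_j (i<j) *)
Definition wedge_coord (n : nat) (u v : 'cV[R]_n) (i j : 'I_n) : R :=
  u i 0 * v j 0 - u j 0 * v i 0.

Definition basis_vec (n : nat) (k : 'I_n) : 'cV[R]_n := delta_mx k 0.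

(* column (k,l) = coordinates of  M e_k /\ e_l + e_k /\ M e_l *)
Definition add_compound2 (n : nat) (M : 'M[R]_n) : 'M[R]_#|wedge_idx n| :=
  \matrix_(r < #|wedge_idx n|, c < #|wedge_idx n|)
    let: (i, j) := enum_val r in
    let: (k, l) := enum_val c in
    wedge_coord (M *m basis_vec k) (basis_vec l) i j
    + wedge_coord (basis_vec k) (M *m basis_vec l) i j.

End Defs.

From mathcomp Require Import all_boot all_order all_algebra all_fingroup.
From mathcomp Require Import complex ring.
Import Order.TTheory GRing.Theory Num.Theory.
Local Open Scope ring_scope.
Set Implicit Arguments. Unset Strict Implicit. Unset Printing Implicit Defensive.

(* Expanding det (A + D) for a diagonal D >= 0 by multilinearity along the
   diagonal writes it as a sum of principal minors of A with nonnegative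
   weights, the empty minor having weight prod_i D_ii.  So A + t I has positive
   determinant when A is a P0-matrix and t > 0, or A is a P-matrix and t >= 0,
   and the real eigenvalues of A are >= 0, resp. > 0.  A nonreal eigenvalue l
   of M with left eigenvector u makes u /\ conj u a left eigenvector of M^[2]
   for the real eigenvalue l + conj l = 2 Re l, so the same applies to it. *)

Section Determinants.
Variable R : comPzRingType.

Lemma det_mxsub_bij m n (f : 'I_m -> 'I_n) (A : 'M[R]_n) :
  bijective f -> \det (mxsub f f A) = \det A.
Proof.
move=> f_bij; have e : m = n by rewrite -[m]card_ord -[n]card_ord (bij_eq_card f_bij).
case: n / e in f A f_bij *.
have -> : mxsub f f A = row_perm (perm (bij_inj f_bij)) (col_perm (perm (bij_inj f_bij)) A).
  by apply/matrixP => i j; rewrite !mxE !permE.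
rewrite row_permE col_permE !det_mulmx !det_perm odd_permV.
by rewrite mulrCA -signr_addb addbb expr0 mulr1.
Qed.

Lemma det_delta_row n (A : 'M[R]_n) k :
  (forall j, A k j = (k == j)%:R) -> \det A = \det (row' k (col' k A)).
Proof.
move=> Ak; rewrite (expand_det_row A k) (bigD1 k) //= big1 => [|j /negbTE kj].
  by rewrite Ak eqxx mul1r addr0 /cofactor addnn -signr_odd odd_double mul1r.
by rewrite Ak eq_sym kj mul0r.
Qed.

End Determinants.

Lemma eigenvalue_det_sub (F : fieldType) n (A : 'M[F]_n) a :
  eigenvalue A a -> \det (A - a%:M) = 0.
Proof.
case/eigenvalueP => v Av v_neq0; apply/eqP/det0P; exists v => //.
by rewrite mulmxBr Av mul_mx_scalar subrr.
Qed.

Section PrincipalPad.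
Variables (R : comPzRingType) (n : nat).
Implicit Types (A B : 'M[R]_n) (S T : {set 'I_n}).

Definition principal_pad S A : 'M[R]_n :=
  \matrix_(i, j) if (i \in S) && (j \in S) then A i j else (i == j)%:R.

Lemma principal_pad_set0 A : principal_pad set0 A = 1%:M.
Proof. by apply/matrixP => i j; rewrite !mxE !inE. Qed.

Lemma principal_pad_setT A : principal_pad setT A = A.
Proof. by apply/matrixP => i j; rewrite !mxE !inE. Qed.

Lemma principal_pad_add_delta_notin T B k c : k \notin T ->
  principal_pad T (B + c *: delta_mx k k) = principal_pad T B.
Proof.
move=> kT; apply/matrixP => i j; rewrite !mxE.
case: (boolP (i \in T)) => //= iT.
by rewrite (_ : i == k = false) ?mulr0 ?addr0 //; apply: contraNF kT => /eqP <-.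
Qed.

Lemma det_principal_pad_add_delta T B k c : k \in T ->
  \det (principal_pad T (B + c *: delta_mx k k)) =
  \det (principal_pad T B) + c * \det (principal_pad (T :\ k) B).
Proof.
move=> kT; set C := \matrix_(i, j) if i == k then (k == j)%:R else principal_pad T B i j.
have neq_lift_k i : (lift k i == k) = false by apply/negbTE; rewrite eq_sym neq_lift.
have -> : \det (principal_pad (T :\ k) B) = \det C.
  rewrite (det_delta_row (k := k)) => [|j]; last by rewrite !mxE in_setD1 eqxx.
  rewrite [\det C](det_delta_row (k := k)) => [|j]; last by rewrite !mxE eqxx.
  by congr (\det _); apply/matrixP => i j; rewrite !mxE !in_setD1 !neq_lift_k.
rewrite -[\det (principal_pad T B)]mul1r; apply: (determinant_multilinear (i0 := k)).
- apply/rowP => j; rewrite !mxE kT eqxx /= mul1r [k == j]eq_sym.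
  by case: eqVneq => [->|_]; rewrite ?kT ?mulr0 ?addr0 ?mulr1 //; case: (j \in T).
- by apply/matrixP => i j; rewrite !mxE neq_lift_k mulr0 addr0.
- by apply/matrixP => i j; rewrite !mxE neq_lift_k mulr0 addr0.
Qed.

Lemma det_principal_pad_set0 A : \det (principal_pad set0 A) = 1.
Proof. by rewrite principal_pad_set0 det1. Qed.

End PrincipalPad.

Section PrincipalPadPositivity.
Variables (R : numDomainType) (n : nat) (A : 'M[R]_n) (d : 'rV[R]_n).
Local Notation partial_diag r := (\sum_(k <- r) d 0 k *: delta_mx k k).

Lemma partial_diag_enum : partial_diag (enum 'I_n) = diag_mx d.
Proof. by rewrite big_enum diag_mx_sum_delta. Qed.

Lemma det_principal_pad_add_diag_ge0 :
  (forall S, 0 <= \det (principal_pad S A)) -> (forall i, 0 <= d 0 i) ->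
  forall (r : seq 'I_n) (T : {set 'I_n}), 0 <= \det (principal_pad T (A + partial_diag r)).
Proof.
move=> A_ge0 d_ge0; elim=> [|k r IH] T; first by rewrite big_nil addr0.
rewrite big_cons addrCA addrC; case: (boolP (k \in T)) => kT.
  by rewrite det_principal_pad_add_delta // addr_ge0 ?mulr_ge0.
by rewrite principal_pad_add_delta_notin.
Qed.

Lemma det_principal_pad_add_diag_gt0 :
  (forall S, 0 < \det (principal_pad S A)) -> (forall i, 0 <= d 0 i) ->
  forall (r : seq 'I_n) (T : {set 'I_n}), 0 < \det (principal_pad T (A + partial_diag r)).
Proof.
move=> A_gt0 d_ge0; have A_ge0 S := ltW (A_gt0 S).
elim=> [|k r IH] T; first by rewrite big_nil addr0.
rewrite big_cons addrCA addrC; case: (boolP (k \in T)) => kT.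
  by rewrite det_principal_pad_add_delta // ltr_wpDr ?mulr_ge0 ?det_principal_pad_add_diag_ge0.
by rewrite principal_pad_add_delta_notin.
Qed.

Lemma det_principal_pad_add_posdiag_gt0 :
  (forall S, 0 <= \det (principal_pad S A)) -> (forall i, 0 < d 0 i) ->
  forall (r : seq 'I_n) (T : {set 'I_n}), {subset T <= r} ->
  0 < \det (principal_pad T (A + partial_diag r)).
Proof.
move=> A_ge0 d_gt0; have d_ge0 i := ltW (d_gt0 i).
elim=> [|k r IH] T Tr.
  have -> : T = set0 by apply/setP => i; rewrite inE; apply/idP => /Tr.
  by rewrite det_principal_pad_set0 ltr01.
rewrite big_cons addrCA addrC; case: (boolP (k \in T)) => kT.
  rewrite det_principal_pad_add_delta // ltr_wpDl ?det_principal_pad_add_diag_ge0 //.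
  by rewrite mulr_gt0 // IH // => i; rewrite in_setD1 => /andP[ik /Tr]; rewrite inE (negbTE ik).
rewrite principal_pad_add_delta_notin // IH // => i iT.
by have := Tr i iT; rewrite inE; case: eqVneq iT kT => [-> ->|].
Qed.

End PrincipalPadPositivity.

Section PrincipalMinors.
Variables (R : rcfType) (n : nat).
Implicit Types (A : 'M[R]_n) (S : {set 'I_n}).

Lemma det_principal_pad S A : \det (principal_pad S A) = principal_minor A S.
Proof.
have inS (a : 'I_#|S|) : enum_val a \in S := enum_valP a.
have notinS (b : 'I_#|~: S|) : enum_val b \in S = false.
  by have := enum_valP b; rewrite inE => /negbTE.
pose g (x : 'I_#|S| + 'I_#|~: S|) : 'I_n :=
  match x with inl a => enum_val a | inr b => enum_val b end.
have g_inj : injective g.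
  move=> [a|b] [a'|b'] /= e; rewrite ?(enum_val_inj e) //.
  - by have := inS a; rewrite e notinS.
  - by have := inS a'; rewrite -e notinS.
pose f i := g (split i).
have f_inj : injective f by apply: inj_comp g_inj (can_inj splitK).
have f_bij : bijective f by apply: (inj_card_bij f_inj); rewrite cardsC !card_ord.
rewrite -(det_mxsub_bij _ f_bij).
have -> : mxsub f f (principal_pad S A) = block_mx (principal_submx A S) 0 0 1%:M.
  apply/matrixP => i j; rewrite mxE /f -(splitK i) -(splitK j) !unsplitK.
  case: (split i) => a; case: (split j) => b /=.
  - by rewrite block_mxEul !mxE !inS.
  - rewrite block_mxEur !mxE notinS andbF.
    by case: eqP => // e; have := inS a; rewrite e notinS.
  - rewrite block_mxEdl !mxE notinS.
    by case: eqP => // e; have := inS b; rewrite -e notinS.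
  - by rewrite block_mxEdr !mxE notinS (inj_eq enum_val_inj).
by rewrite det_ublock det1 mulr1.
Qed.

Lemma P0_det_principal_pad_ge0 A S : P0_matrix A -> 0 <= \det (principal_pad S A).
Proof.
move=> A_P0; have [->|S0] := eqVneq S set0; first by rewrite det_principal_pad_set0 ler01.
by rewrite det_principal_pad A_P0.
Qed.

Lemma P_det_principal_pad_gt0 A S : P_matrix A -> 0 < \det (principal_pad S A).
Proof.
move=> A_P; have [->|S0] := eqVneq S set0; first by rewrite det_principal_pad_set0 ltr01.
by rewrite det_principal_pad A_P.
Qed.

Lemma P0_det_add_diag_gt0 A (d : 'rV[R]_n) :
  P0_matrix A -> (forall i, 0 < d 0 i) -> 0 < \det (A + diag_mx d).
Proof.
move=> A_P0 d_gt0; rewrite -[A + _]principal_pad_setT -partial_diag_enum.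
apply: det_principal_pad_add_posdiag_gt0 => // [S|i _]; last by rewrite mem_enum.
exact: P0_det_principal_pad_ge0.
Qed.

Lemma P_det_add_diag_gt0 A (d : 'rV[R]_n) :
  P_matrix A -> (forall i, 0 <= d 0 i) -> 0 < \det (A + diag_mx d).
Proof.
move=> A_P d_ge0; rewrite -[A + _]principal_pad_setT -partial_diag_enum.
by apply: det_principal_pad_add_diag_gt0 => // S; apply: P_det_principal_pad_gt0.
Qed.

Lemma P0_eigenvalue_ge0 A r : P0_matrix A -> eigenvalue A r -> 0 <= r.
Proof.
move=> A_P0 /eigenvalue_det_sub; rewrite leNgt; apply: contra_eqN => r_lt0.
have -> : A - r%:M = A + diag_mx (const_mx (- r)) by rewrite diag_const_mx raddfN.
by apply/lt0r_neq0/P0_det_add_diag_gt0 => // i; rewrite mxE oppr_gt0.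
Qed.

Lemma P_eigenvalue_gt0 A r : P_matrix A -> eigenvalue A r -> 0 < r.
Proof.
move=> A_P /eigenvalue_det_sub; rewrite ltNge; apply: contra_eqN => r_le0.
have -> : A - r%:M = A + diag_mx (const_mx (- r)) by rewrite diag_const_mx raddfN.
by apply/lt0r_neq0/P_det_add_diag_gt0 => // i; rewrite mxE oppr_ge0.
Qed.

End PrincipalMinors.

Definition wedge_row (F : pzRingType) n (u v : 'rV[F]_n) : 'rV[F]_#|wedge_idx n| :=
  \row_r (u 0 (enum_val r).1 * v 0 (enum_val r).2 - u 0 (enum_val r).2 * v 0 (enum_val r).1).

Lemma wedge_row_eq0 (F : fieldType) n (u v : 'rV[F]_n) :
  u != 0 -> wedge_row u v = 0 -> exists c, v = c *: u.
Proof.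
move=> u_neq0 uv0.
have uv_sym i j : u 0 i * v 0 j = u 0 j * v 0 i.
  wlog lt_ij : i j / (i < j)%N.
    by move=> wlog_ij; case: (ltngtP i j) => [/wlog_ij|/wlog_ij->|/val_inj->].
  have ij_in : (i, j) \in wedge_idx n by rewrite inE.
  have /eqP := congr1 (fun w : 'rV_#|wedge_idx n| => w 0 (enum_rank_in ij_in (i, j))) uv0.
  by rewrite !mxE enum_rankK_in //= subr_eq0 => /eqP.
have /rV0Pn[k uk_neq0] := u_neq0.
exists (v 0 k / u 0 k); apply/rowP => j; rewrite mxE.
by rewrite mulrAC [v 0 k * _]mulrC uv_sym mulrAC divff // mul1r.
Qed.

Lemma wedge_row_eigen_neq0 (F : fieldType) n (A : 'M[F]_n) u v a b :
  u *m A = a *: u -> v *m A = b *: v -> u != 0 -> v != 0 -> a != b ->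
  wedge_row u v != 0.
Proof.
move=> uA vA u_neq0 v_neq0 ab; apply/eqP => /(wedge_row_eq0 u_neq0) [c vc].
have : a *: v = b *: v by rewrite -vA vc -scalemxAl uA !scalerA mulrC.
by move/eqP; rewrite -subr_eq0 -scalerBl scaler_eq0 subr_eq0 (negbTE ab) (negbTE v_neq0).
Qed.

Lemma binet_cauchy2 (F : comPzRingType) n (a b x y : 'I_n -> F) :
  \sum_(p in wedge_idx n) (a p.1 * b p.2 - a p.2 * b p.1) * (x p.1 * y p.2 - x p.2 * y p.1) =
  (\sum_i a i * x i) * (\sum_i b i * y i) - (\sum_i a i * y i) * (\sum_i b i * x i).
Proof.
pose f (p : 'I_n * 'I_n) := a p.1 * x p.1 * (b p.2 * y p.2) - a p.1 * y p.1 * (b p.2 * x p.2).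
have -> : (\sum_i a i * x i) * (\sum_i b i * y i) - (\sum_i a i * y i) * (\sum_i b i * x i) =
          \sum_p f p.
  rewrite !big_distrlr -sumrB; under eq_bigr => i _ do rewrite -sumrB.
  by rewrite pair_bigA; apply: eq_bigr => -[i j].
have swap_inj : injective (fun p : 'I_n * 'I_n => (p.2, p.1)) by move=> [? ?] [? ?] [-> ->].
rewrite [RHS](bigID (mem (wedge_idx n))) /= [X in _ + X](reindex_inj swap_inj) /=.
rewrite [X in _ + X](bigID (mem (wedge_idx n))) /= [X in _ + (_ + X)]big1 => [|[i j]]; last first.
  rewrite !inE /= -!leqNgt => /andP[le_ij le_ji].
  by rewrite (_ : i = j) ?/f /=; [ring | apply/val_inj/anti_leq; rewrite le_ij].
rewrite addr0 [X in _ + X](eq_bigl (mem (wedge_idx n))) => [|[i j]]; last first.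
  by rewrite !inE /=; case: ltngtP.
by rewrite -big_split; apply: eq_bigr => -[i j] _; rewrite /f /=; ring.
Qed.

Lemma sum_mulr_delta (F : pzSemiRingType) n (f : 'I_n -> F) l :
  \sum_i f i * (i == l)%:R = f l.
Proof.
rewrite (bigD1 l) //= eqxx mulr1 big1 ?addr0 // => i /negbTE il.
by rewrite il mulr0.
Qed.

Section SecondAdditiveCompound.
Variables (R : rcfType) (n : nat) (M : 'M[R]_n).

Lemma add_compound2E r c i j k l : enum_val r = (i, j) -> enum_val c = (k, l) ->
  add_compound2 M r c =
  M i k * (j == l)%:R - M j k * (i == l)%:R + ((i == k)%:R * M j l - (j == k)%:R * M i l).
Proof.
move=> ri cl.
by rewrite mxE ri cl /wedge_coord /basis_vec -!colE !mxE !eqxx !andbT.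
Qed.

Lemma add_compound2_wedge_row (u v : 'rV[R[i]]_n) a b :
  u *m cmx M = a *: u -> v *m cmx M = b *: v ->
  wedge_row u v *m cmx (add_compound2 M) = (a + b) *: wedge_row u v.
Proof.
have dotE (w : 'rV[R[i]]_n) k : \sum_i w 0 i * (M i k)%:C%C = (w *m cmx M) 0 k.
  by rewrite mxE; apply: eq_bigr => i _; rewrite mxE.
move=> uM vM; apply/rowP => c; rewrite [LHS]mxE [RHS]mxE [wedge_row u v 0 c]mxE.
case cE: (enum_val c) => [k l] /=.
pose x1 i := (M i k)%:C%C; pose y1 (j : 'I_n) : R[i] := (j == l)%:R.
pose x2 (i : 'I_n) : R[i] := (i == k)%:R; pose y2 j := (M j l)%:C%C.
pose w (p : 'I_n * 'I_n) := u 0 p.1 * v 0 p.2 - u 0 p.2 * v 0 p.1.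
pose G p := w p * (x1 p.1 * y1 p.2 - x1 p.2 * y1 p.1) + w p * (x2 p.1 * y2 p.2 - x2 p.2 * y2 p.1).
rewrite (eq_bigr (fun r => G (enum_val r))) => [|r _]; last first.
  rewrite [wedge_row u v 0 r]mxE [cmx _ r c]mxE; case rE: (enum_val r) => [i j] /=.
  rewrite (add_compound2E rE cE) /G /x1 /x2 /y1 /y2 -mulrDr.
  by rewrite !(rmorphD, rmorphB, rmorphN, rmorphM, rmorph_nat).
rewrite -(big_enum_val G) /= big_split /= !binet_cauchy2 !sum_mulr_delta /x1 /x2 /y2.
by rewrite !dotE uM vM !mxE; ring.
Qed.

Lemma cmx_conjc : map_mx conjc (cmx M) = cmx M.
Proof. by apply/matrixP => i j; rewrite !mxE conjc_real. Qed.

Lemma eigenvector_conjc (u : 'rV[R[i]]_n) a :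
  u *m cmx M = a *: u -> map_mx conjc u *m cmx M = a^*%C *: map_mx conjc u.
Proof. by move=> uM; rewrite -[cmx M]cmx_conjc -map_mxM uM map_mxZ. Qed.

Lemma eigenvalue_add_compound2_nonreal l :
  eigenvalue (cmx M) l -> complex.Im l != 0 ->
  eigenvalue (add_compound2 M) (2 * complex.Re l).
Proof.
case/eigenvalueP => u uM u_neq0 Im_neq0.
rewrite -(eigenvalue_map (real_complex R)) rmorphM rmorph_nat -addcJ.
apply/eigenvalueP; exists (wedge_row u (map_mx conjc u)).
  exact/add_compound2_wedge_row/eigenvector_conjc.
apply: (wedge_row_eigen_neq0 uM (eigenvector_conjc uM)) => //.
  by rewrite map_mx_eq0.
by rewrite -subr_eq0 subcJ !mulf_neq0 ?pnatr_eq0 ?fmorph_eq0 // eq_complex /= oner_eq0 andbF.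
Qed.

Lemma eigenvalue_cmx_Re l : eigenvalue (cmx M) l ->
  eigenvalue M (complex.Re l) \/ eigenvalue (add_compound2 M) (2 * complex.Re l).
Proof.
move=> Ml; have [Im0|Im_neq0] := eqVneq (complex.Im l) 0; last first.
  by right; apply: eigenvalue_add_compound2_nonreal.
left; rewrite -(eigenvalue_map (real_complex R)).
by move: Ml; case: l Im0 => x y /= ->.
Qed.

End SecondAdditiveCompound.

Theorem lemma2p5 (R : rcfType) (n : nat) (M : 'M[R]_n) (hn : (1 < n)%N) :
  (P0_matrix M -> P0_matrix (add_compound2 M) -> positive_semistable M) /\
  (P_matrix M -> P_matrix (add_compound2 M) -> positive_stable M).
Proof.
split=> [M_P0 M2_P0 | M_P M2_P] l /eigenvalue_cmx_Re[].
- exact: P0_eigenvalue_ge0.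
- by move/(P0_eigenvalue_ge0 M2_P0); rewrite pmulr_rge0 ?ltr0n.
- exact: P_eigenvalue_gt0.
- by move/(P_eigenvalue_gt0 M2_P); rewrite pmulr_rgt0 ?ltr0n.
Qed.
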